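(* Let $(X,d)$ be a metric space admitting a weak conical bicombing and let $T$ be an isometry of $X$ (a surjective distance-preserving map) with $\inf_{x\in X}d(x,Tx)>0$. Then $T$ has infinite order; in fact $d(x,T^{n}x)\rightarrow\infty$ as $n\to\infty$ for every $x\in X$.
   Context: A weak conical bicombing on $X$ is a map $\sigma:X\times X\times[0,1]\to X$, $(x,y,t)\mapsto\sigma_{xy}(t)$, such that each $\sigma_{xy}$ is a constant speed geodesic from $x$ to $y$ (i.e. $\sigma_{xy}(0)=x$, $\sigma_{xy}(1)=y$, $d(\sigma_{xy}(s),\sigma_{xy}(t))=|s-t|\,d(x,y)$), and $d(\sigma_{xy}(t),\sigma_{xy'}(t))\le t\,d(y,y')$ for all $x,y,y'\in X$ and $t\in[0,1]$. *)

From Stdlib Require Import Reals.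
Open Scope R_scope.

Definition is_metric {X : Type} (d : X -> X -> R) : Prop :=
  (forall x y, 0 <= d x y) /\
  (forall x y, d x y = 0 <-> x = y) /\
  (forall x y, d x y = d y x) /\
  (forall x y z, d x z <= d x y + d y z).

(* sigma x y t = sigma_{xy}(t); only values for t in [0,1] matter. *)
Definition weak_conical_bicombing {X : Type} (d : X -> X -> R)
  (sigma : X -> X -> R -> X) : Prop :=
  (forall x y, sigma x y 0 = x) /\
  (forall x y, sigma x y 1 = y) /\
  (forall x y s t, 0 <= s <= 1 -> 0 <= t <= 1 ->
     d (sigma x y s) (sigma x y t) = Rabs (s - t) * d x y) /\
  (forall x y y' t, 0 <= t <= 1 ->
     d (sigma x y t) (sigma x y' t) <= t * d y y').

Definition admits_weak_conical_bicombing {X : Type} (d : X -> X -> R) : Prop :=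
  exists sigma : X -> X -> R -> X, weak_conical_bicombing d sigma.

Definition isometry {X : Type} (d : X -> X -> R) (T : X -> X) : Prop :=
  (forall y, exists x, T x = y) /\ (forall x y, d (T x) (T y) = d x y).

(** The orbit displacement D m := d(x, T^m x) is subadditive, so it grows at
    most linearly with slope D n / n for every n.  Conversely, if D grows at
    most like a m + C, the bicombing produces points of displacement close to
    a: iterate the contraction y |-> sigma_{x,Ty}(1-u).  Convexity of the
    distance to the backward orbit keeps these iterates within
    a j + C + a (1-u)/u of every T^-j x, while the contraction makes them
    almost fixed, so their displacement is at most
    a + u C + (1-u)^N d(x, Tx).  Hence inf d(z, Tz) <= D n / n, i.e.
    d(x, T^n x) >= n inf d(z, Tz). *)

From Stdlib Require Import Reals Lra Lia.
Open Scope R_scope.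

Lemma iter_contraction_step {Y : Type} (d : Y -> Y -> R) (F : Y -> Y) (t : R) :
  0 <= t -> (forall y y', d (F y) (F y') <= t * d y y') ->
  forall y k, d (Nat.iter k F y) (Nat.iter (S k) F y) <= t ^ k * d y (F y).
Proof.
  intros Ht HF y k; induction k as [|k IH].
  - simpl; lra.
  - rewrite (Nat.iter_succ (S k)), (Nat.iter_succ k).
    eapply Rle_trans; [apply HF|].
    simpl pow; rewrite Rmult_assoc; apply Rmult_le_compat_l; assumption.
Qed.

Lemma subadditive_le_linear (D : nat -> R) (n : nat) :
  D 0%nat = 0 -> (forall m, 0 <= D m) ->
  (forall p k, D (p + k)%nat <= D p + D k) -> (n >= 1)%nat ->
  forall m, D m <= D n / INR n * INR m + INR n * D 1%nat.
Proof.
  intros HD0 HDpos Hadd Hn m.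
  assert (HnR : 0 < INR n) by (apply lt_0_INR; lia).
  assert (Hmul : forall q r, D (q * n + r)%nat <= INR q * D n + D r).
  { induction q as [|q IH]; intro r.
    - simpl; lra.
    - replace (S q * n + r)%nat with (n + (q * n + r))%nat by lia.
      rewrite S_INR; specialize (IH r); specialize (Hadd n (q * n + r)%nat); lra. }
  assert (Hlin : forall r, D r <= INR r * D 1%nat).
  { induction r as [|r IH].
    - rewrite HD0; simpl; lra.
    - replace (S r) with (r + 1)%nat by lia.
      rewrite plus_INR; specialize (Hadd r 1%nat); simpl INR; lra. }
  pose proof (Nat.div_mod m n ltac:(lia)) as Hm.
  pose proof (Nat.mod_upper_bound m n ltac:(lia)) as Hr.
  set (q := (m / n)%nat) in *; set (r := (m mod n)%nat) in *.
  assert (Hslope : INR q * D n <= D n / INR n * INR m).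
  { rewrite Hm, plus_INR, mult_INR.
    assert (0 <= D n / INR n * INR r)
      by (apply Rmult_le_pos; [apply Rle_mult_inv_pos; auto | apply pos_INR]).
    replace (D n / INR n * (INR n * INR q + INR r))
      with (INR q * D n + D n / INR n * INR r) by (field; lra).
    lra. }
  assert (Hrem : D r <= INR n * D 1%nat).
  { eapply Rle_trans; [apply Hlin|].
    apply Rmult_le_compat_r; [apply HDpos | apply le_INR; lia]. }
  replace m with (n * q + r)%nat at 1 by exact (eq_sym Hm).
  rewrite Nat.mul_comm.
  specialize (Hmul q r); lra.
Qed.

Section Bicombing.

Variables (X : Type) (d : X -> X -> R) (sigma : X -> X -> R -> X).
Hypothesis metric_d : is_metric d.
Hypothesis bicombing_sigma : weak_conical_bicombing d sigma.

Lemma dist_ge0 x y : 0 <= d x y.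
Proof. apply metric_d. Qed.

Lemma dist_refl x : d x x = 0.
Proof. apply metric_d; reflexivity. Qed.

Lemma dist_sym x y : d x y = d y x.
Proof. apply metric_d. Qed.

Lemma dist_triangle x y z : d x z <= d x y + d y z.
Proof. apply metric_d. Qed.

Lemma dist_bicombing_l x y t : 0 <= t <= 1 -> d x (sigma x y t) = t * d x y.
Proof.
  intro Ht; destruct bicombing_sigma as [H0 [_ [Hgeod _]]].
  rewrite <- (H0 x y) at 1; rewrite Hgeod by lra.
  rewrite Rabs_left1 by lra; ring.
Qed.

Lemma dist_bicombing_r x y t : 0 <= t <= 1 -> d (sigma x y t) y = (1 - t) * d x y.
Proof.
  intro Ht; destruct bicombing_sigma as [_ [H1 [Hgeod _]]].
  rewrite <- (H1 x y) at 2; rewrite Hgeod by lra.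
  rewrite Rabs_left1 by lra; ring.
Qed.

Lemma dist_bicombing_contract x y y' t : 0 <= t <= 1 ->
  d (sigma x y t) (sigma x y' t) <= t * d y y'.
Proof. apply bicombing_sigma. Qed.

Lemma dist_bicombing_convex p x y t : 0 <= t <= 1 ->
  d p (sigma x y t) <= (1 - t) * d p x + t * d p y.
Proof.
  intro Ht.
  eapply Rle_trans; [apply (dist_triangle _ (sigma x p t))|].
  rewrite (dist_sym p (sigma x p t)), (dist_bicombing_r x p t Ht), (dist_sym x p).
  pose proof (dist_bicombing_contract x p y t Ht); lra.
Qed.

Variable T : X -> X.
Hypothesis T_surj : forall y, exists x, T x = y.
Hypothesis T_iso : forall x y, d (T x) (T y) = d x y.

Lemma dist_iter n a b : d (Nat.iter n T a) (Nat.iter n T b) = d a b.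
Proof.
  induction n as [|n IH]; [reflexivity|].
  rewrite !Nat.iter_succ, T_iso; exact IH.
Qed.

Lemma dist_orbit_subadditive x p k :
  d x (Nat.iter (p + k) T x) <= d x (Nat.iter p T x) + d x (Nat.iter k T x).
Proof.
  rewrite Nat.iter_add, <- (dist_iter p x (Nat.iter k T x)).
  apply dist_triangle.
Qed.

Section Contraction.

Variables (x : X) (a C u : R).
Hypothesis orbit_linear : forall m, d x (Nat.iter m T x) <= a * INR m + C.
Hypothesis slope_nonneg : 0 <= a.
Hypothesis u_range : 0 < u <= 1.

Let F (y : X) : X := sigma x (T y) (1 - u).

Lemma F_contract y y' : d (F y) (F y') <= (1 - u) * d y y'.
Proof.
  unfold F; rewrite <- (T_iso y y').
  apply dist_bicombing_contract; lra.
Qed.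

(* q := a (1 - u) / u solves u (a j + C) + (1 - u) (a (j + 1) + C + q) = a j + C + q. *)
Lemma dist_backward_orbit_iter_F k : forall j b, Nat.iter j T b = x ->
  d b (Nat.iter k F x) <= a * INR j + C + a * (1 - u) / u.
Proof.
  assert (Hq : 0 <= a * (1 - u) / u)
    by (apply Rle_mult_inv_pos; [apply Rmult_le_pos|]; lra).
  assert (Hbx : forall j b, Nat.iter j T b = x -> d b x <= a * INR j + C).
  { intros j b Hb; rewrite <- (dist_iter j b x), Hb; apply orbit_linear. }
  induction k as [|k IH]; intros j b Hb.
  - specialize (Hbx j b Hb); simpl; lra.
  - destruct (T_surj b) as [b' Hb'].
    assert (Hb'x : Nat.iter (S j) T b' = x) by (rewrite Nat.iter_succ_r, Hb'; exact Hb).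
    specialize (IH (S j) b' Hb'x); specialize (Hbx j b Hb).
    rewrite Nat.iter_succ; unfold F at 1.
    eapply Rle_trans; [apply dist_bicombing_convex; lra|].
    rewrite <- Hb', T_iso, S_INR in *.
    assert (Hsplit : a * INR j + C + a * (1 - u) / u
      = u * (a * INR j + C) + (1 - u) * (a * (INR j + 1) + C + a * (1 - u) / u))
      by (field; lra).
    rewrite Hsplit; replace (1 - (1 - u)) with u by ring.
    apply Rplus_le_compat; apply Rmult_le_compat_l; lra.
Qed.

Lemma displacement_iter_F_le N :
  let y := Nat.iter N F x in
  d y (T y) <= a + u * C + (1 - u) ^ S N * d x (T x).
Proof.
  intro y.
  assert (Hstep : d y (F y) <= (1 - u) ^ S N * d x (T x)).
  { eapply Rle_trans.
    - apply (iter_contraction_step d F (1 - u)); [lra | apply F_contract].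
    - change (F x) with (sigma x (T x) (1 - u)); rewrite dist_bicombing_l by lra.
      simpl pow; rewrite (Rmult_comm (1 - u) ((1 - u) ^ N)), Rmult_assoc; lra. }
  assert (Hback : d x (T y) <= a + C + a * (1 - u) / u).
  { destruct (T_surj x) as [b Hb].
    rewrite <- Hb at 1; rewrite T_iso.
    replace (a + C) with (a * INR 1 + C) by (simpl; ring).
    apply dist_backward_orbit_iter_F; exact Hb. }
  assert (Hfar : d (F y) (T y) = u * d x (T y))
    by (unfold F; rewrite dist_bicombing_r by lra; ring).
  assert (Hu : u * (a + C + a * (1 - u) / u) = a + u * C) by (field; lra).
  pose proof (dist_triangle y (F y) (T y)).
  pose proof (Rmult_le_compat_l u _ _ (ltac:(lra) : 0 <= u) Hback).
  lra.
Qed.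

End Contraction.

Lemma translation_length_le_slope eps x a C :
  (forall z, eps <= d z (T z)) -> 0 <= a ->
  (forall m, d x (Nat.iter m T x) <= a * INR m + C) -> eps <= a.
Proof.
  intros Hdisp Ha Horbit.
  assert (HC : 0 <= C).
  { specialize (Horbit 0%nat); simpl in Horbit; rewrite dist_refl in Horbit; lra. }
  apply Rnot_lt_le; intro Hlt.
  set (delta := eps - a).
  set (u := delta / (2 * (C + delta))).
  assert (Hu : 0 < u <= 1).
  { unfold u; split.
    - apply Rdiv_lt_0_compat; unfold delta; lra.
    - apply Rmult_le_reg_r with (2 * (C + delta)); [unfold delta; lra|].
      field_simplify; unfold delta; lra. }
  assert (HuC : u * C < delta / 2).
  { unfold u; apply Rmult_lt_reg_r with (2 * (C + delta)); [unfold delta; lra|].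
    field_simplify; unfold delta; nra. }
  set (D := d x (T x)).
  assert (HD : 0 <= D) by apply dist_ge0.
  destruct (pow_lt_1_zero (1 - u) ltac:(rewrite Rabs_right; lra)
              (delta / (2 * (D + 1))) ltac:(apply Rdiv_lt_0_compat; unfold delta; lra))
    as [N HN].
  specialize (HN (S N) ltac:(lia)).
  rewrite Rabs_right in HN by (apply Rle_ge, pow_le; lra).
  assert (Hsmall : (1 - u) ^ S N * D <= delta / 2).
  { apply Rle_trans with (delta / (2 * (D + 1)) * D); [apply Rmult_le_compat_r; lra|].
    apply Rmult_le_reg_r with (2 * (D + 1)); [lra|].
    field_simplify; unfold delta; nra. }
  pose proof (displacement_iter_F_le x a C u Horbit Ha Hu N) as Hy.
  pose proof (Hdisp (Nat.iter N (fun y => sigma x (T y) (1 - u)) x)).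
  cbv zeta in Hy; fold D in Hy.
  unfold delta in *; lra.
Qed.

Lemma mul_le_dist_iter eps x n :
  (forall z, eps <= d z (T z)) -> INR n * eps <= d x (Nat.iter n T x).
Proof.
  intro Hdisp.
  destruct n as [|n']; [simpl; rewrite dist_refl; lra|].
  set (n := S n').
  assert (Hn : 0 < INR n) by (apply lt_0_INR; unfold n; lia).
  assert (Hslope : eps <= d x (Nat.iter n T x) / INR n).
  { apply (translation_length_le_slope eps x _ (INR n * d x (T x)) Hdisp).
    - apply Rle_mult_inv_pos; [apply dist_ge0 | exact Hn].
    - apply (subadditive_le_linear (fun m => d x (Nat.iter m T x))).
      + apply dist_refl.
      + intro; apply dist_ge0.
      + apply dist_orbit_subadditive.
      + unfold n; lia. }
  apply Rmult_le_compat_l with (r := INR n) in Hslope; [|lra].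
  replace (INR n * (d x (Nat.iter n T x) / INR n)) with (d x (Nat.iter n T x))
    in Hslope by (field; lra).
  exact Hslope.
Qed.

End Bicombing.

Theorem corollary2 (X : Type) (d : X -> X -> R) (T : X -> X) :
  inhabited X ->
  is_metric d ->
  admits_weak_conical_bicombing d ->
  isometry d T ->
  (exists eps, 0 < eps /\ forall x, eps <= d x (T x)) ->
  (forall n : nat, (n >= 1)%nat -> exists x, Nat.iter n T x <> x) /\
  (forall x : X, forall M : R, exists N : nat,
     forall n : nat, (n >= N)%nat -> M <= d x (Nat.iter n T x)).
Proof.
  intros [x0] Hd [sigma Hsigma] [Hsurj Hiso] [eps [Heps Hdisp]].
  pose proof (mul_le_dist_iter X d sigma Hd Hsigma T Hsurj Hiso eps) as Hgrowth.
  split.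
  - intros n Hn; exists x0; intro Hfix.
    specialize (Hgrowth x0 n Hdisp).
    rewrite Hfix, (dist_refl X d Hd) in Hgrowth.
    assert (0 < INR n) by (apply lt_0_INR; lia).
    nra.
  - intros x M.
    destruct (INR_archimed eps M Heps) as [N HN].
    exists N; intros n Hn.
    specialize (Hgrowth x n Hdisp).
    assert (INR N <= INR n) by (apply le_INR; lia).
    nra.
Qed.
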